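(* Let $k\ge16/(3\sqrt3)$ be real. For $x=e^{i\theta}$ on the unit circle (with $\cos\theta\ne0$) set $$y_{2}(x)=\frac{k-\sqrt{k^2-16\cos^2\theta\,(3-4\cos^2\theta)}}{4\cos\theta}.$$ Then $|y_2(x)|\le1$ for all such $x$.
   Context: $y_2(x)$ is the root of smaller absolute value in $y$ of $(x+x^{-1})y^2-ky-(x^3+x^{-3})=0$ (which equals $-y^3R_k(x/y,1/(xy))$ for $R_k(x,y)=y^3-y+x^3-x+kxy$). Here $\sqrt{\cdot}$ is the principal square root. *)

From Stdlib Require Import Reals.
Open Scope R_scope.

(* Under k >= 16/(3 sqrt 3) the radicand is positive, so the principal square
   root coincides with the real square root [sqrt]. *)
Definition y2 (k theta : R) : R :=
  (k - sqrt (k ^ 2 - 16 * (cos theta) ^ 2 * (3 - 4 * (cos theta) ^ 2)))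
  / (4 * cos theta).

(* With a = |cos theta| the claim is |k - s| <= 4a for s = sqrt(k^2 - 16 a^2 (3 - 4 a^2)),
   i.e. (k - 4a)^2 <= s^2 <= (k + 4a)^2 (the left bound only when k >= 4a).  The right
   bound needs only a <= 1; the left one reduces to 8a - 8a^3 <= k, and 16/(3 sqrt 3) is
   exactly the maximum of 8a - 8a^3, attained at a = 1/sqrt 3. *)

From Stdlib Require Import Reals Lra Psatz.
Open Scope R_scope.

Lemma cubic_le_max (a : R) : 0 <= a -> 8 * a - 8 * a ^ 3 <= 16 / (3 * sqrt 3).
Proof.
  intros ha.
  set (r := sqrt 3).
  assert (hrr : r * r = 3) by (apply sqrt_sqrt; lra).
  assert (hr : 0 < r) by (apply sqrt_lt_R0; lra).
  assert (hfactor : 16 - 3 * r * (8 * a - 8 * a ^ 3)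
                    = 8 * ((r * a - 1) ^ 2 * (r * a + 2))).
  { replace ((r * a - 1) ^ 2 * (r * a + 2)) with (r * (r * r) * a ^ 3 - 3 * r * a + 2)
      by ring.
    rewrite hrr; ring. }
  assert (hnonneg : 0 <= (r * a - 1) ^ 2 * (r * a + 2)).
  { apply Rmult_le_pos; [apply pow2_ge_0 | nra]. }
  apply (Rmult_le_reg_l (3 * r)); [lra|].
  replace (3 * r * (16 / (3 * r))) with 16 by (field; lra).
  lra.
Qed.

Lemma Rabs_sub_sqrt_le (k d D : R) :
  0 <= k + d -> D <= (k + d) ^ 2 -> (0 <= k - d -> (k - d) ^ 2 <= D) ->
  Rabs (k - sqrt D) <= d.
Proof.
  intros hkd hup hlo.
  assert (hsup : sqrt D <= k + d).
  { rewrite <- (sqrt_pow2 (k + d) hkd). now apply sqrt_le_1_alt. }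
  assert (hslo : k - d <= sqrt D).
  { destruct (Rle_dec 0 (k - d)) as [hpos | hneg].
    - rewrite <- (sqrt_pow2 (k - d) hpos). apply sqrt_le_1_alt. now apply hlo.
    - pose proof (sqrt_pos D). lra. }
  apply Rabs_le; lra.
Qed.

Lemma radicand_le_sqr_add (k a : R) :
  0 <= k -> 0 <= a <= 1 -> k ^ 2 - 16 * a ^ 2 * (3 - 4 * a ^ 2) <= (k + 4 * a) ^ 2.
Proof.
  intros hk ha.
  assert (hgap : (k + 4 * a) ^ 2 - (k ^ 2 - 16 * a ^ 2 * (3 - 4 * a ^ 2))
                 = 8 * a * k + 64 * a ^ 2 * (1 - a ^ 2)) by ring.
  assert (0 <= a * k) by (apply Rmult_le_pos; lra).
  assert (0 <= a ^ 2 * (1 - a ^ 2)) by (apply Rmult_le_pos; nra).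
  lra.
Qed.

Lemma sqr_sub_le_radicand (k a : R) :
  0 <= a -> 8 * a - 8 * a ^ 3 <= k -> (k - 4 * a) ^ 2 <= k ^ 2 - 16 * a ^ 2 * (3 - 4 * a ^ 2).
Proof.
  intros ha hk.
  assert (hgap : k ^ 2 - 16 * a ^ 2 * (3 - 4 * a ^ 2) - (k - 4 * a) ^ 2
                 = 8 * a * (k - (8 * a - 8 * a ^ 3))) by ring.
  assert (0 <= 8 * a * (k - (8 * a - 8 * a ^ 3))) by (apply Rmult_le_pos; lra).
  lra.
Qed.

Theorem lemma3 (k : R) (hk : 16 / (3 * sqrt 3) <= k) (theta : R)
  (hc : cos theta <> 0) :
  Rabs (y2 k theta) <= 1.
Proof.
  unfold y2.
  set (a := Rabs (cos theta)).
  assert (ha : 0 < a) by now apply Rabs_pos_lt.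
  assert (ha1 : a <= 1) by (apply Rabs_le, COS_bound).
  assert (hk0 : 0 <= k).
  { pose proof (cubic_le_max 0 (Rle_refl 0)). lra. }
  assert (hnum : Rabs (k - sqrt (k ^ 2 - 16 * a ^ 2 * (3 - 4 * a ^ 2))) <= 4 * a).
  { apply Rabs_sub_sqrt_le.
    - lra.
    - apply radicand_le_sqr_add; lra.
    - intros _. apply sqr_sub_le_radicand; [lra|].
      pose proof (cubic_le_max a (Rlt_le _ _ ha)). lra. }
  rewrite <- (pow2_abs (cos theta)); fold a.
  unfold Rdiv. rewrite Rabs_mult, Rabs_inv, Rabs_mult, (Rabs_right 4) by lra; fold a.
  apply (Rmult_le_reg_r (4 * a)); [lra|].
  rewrite Rmult_assoc, Rinv_l, Rmult_1_r, Rmult_1_l by lra.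
  exact hnum.
Qed.
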